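(* Let $f$ be a multiplicative function from the positive integers to the nonnegative integers with $f(p^{k-1})\le f(p^k)$ for all primes $p$ and integers $k\ge1$. Then $f$ is convenient if and only if the following holds: for every prime $p$ and every $f$-practical positive integer $m$ with $\gcd(m,p)=1$, the inequality $f(p)\le S_f(m)+1$ implies $f(p^{k+1})\le S_f(mp^k)+1$ for every integer $k\ge0$.
   Context: $f$ multiplicative means $f(1)=1$ and $f(ab)=f(a)f(b)$ for coprime $a,b$. $S_f(n)=\sum_{d\mid n} f(d)$. A positive integer $n$ is $f$-practical if every positive integer $m\le S_f(n)$ equals $\sum_{d\in\mathcal{D}}f(d)$ for some set $\mathcal{D}$ of distinct divisors of $n$. Write $n=p_1^{e_1}\cdots p_k^{e_k}$ with distinct primes ordered so that $f(p_1)\le\cdots\le f(p_k)$, and let $m_i=\prod_{j=1}^{i}p_j^{e_j}$ for $0\le i<k$ ($m_0=1$); $n$ is weakly $f$-practical if $f(p_{i+1})\le S_f(m_i)+1$ for every $0\le i<k$. The function $f$ is called convenient if every weakly $f$-practical number is $f$-practical. *)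

(* arithmetic functions nat -> nat (values on 0 are irrelevant). *)
From mathcomp Require Import all_boot.
Set Implicit Arguments. Unset Strict Implicit. Unset Printing Implicit Defensive.

Definition multiplicative (f : nat -> nat) : Prop :=
  f 1 = 1 /\
  forall a b, 0 < a -> 0 < b -> coprime a b -> f (a * b) = f a * f b.

Definition Sf (f : nat -> nat) (n : nat) : nat := \sum_(d <- divisors n) f d.

Definition f_practical (f : nat -> nat) (n : nat) : Prop :=
  0 < n /\
  forall m, 1 <= m <= Sf f n ->
    exists D : seq nat, [/\ uniq D, {subset D <= divisors n} &
                          m = \sum_(d <- D) f d].

(* n is weakly f-practical: writing the distinct prime factors of n as
   p_1, ..., p_k ordered so that f(p_1) <= ... <= f(p_k), and
   m_i = prod_{j <= i} p_j^{e_j}, we have f(p_{i+1}) <= S_f(m_i) + 1. *)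
Definition weakly_f_practical (f : nat -> nat) (n : nat) : Prop :=
  0 < n /\
  exists s : seq nat,
    [/\ perm_eq s (primes n),
        sorted (fun p q => f p <= f q) s &
        forall i, i < size s ->
          f (nth 0 s i) <=
            Sf f (\prod_(j < i) (nth 0 s j) ^ (logn (nth 0 s j) n)) + 1].

Definition convenient (f : nat -> nat) : Prop :=
  forall n, weakly_f_practical f n -> f_practical f n.

From mathcomp Require Import all_boot zify.
Set Implicit Arguments. Unset Strict Implicit. Unset Printing Implicit Defensive.

(* Sufficiency: if n is weakly f-practical, its prefixes m_i are f-practical
   by induction, and m_i p^e is reached from m_i one exponent at a time.
   Since S_f(m p^(j+1)) = S_f(m p^j) + f(p^(j+1)) S_f(m), every
   x <= S_f(m p^(j+1)) can be written r + f(p^(j+1)) t with r <= S_f(m p^j)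
   and t <= S_f(m) as soon as f(p^(j+1)) <= S_f(m p^j) + 1, which is what the
   condition provides.
   Necessity: for m, p as in the condition, every prime q of m p^(k+1) has
   f(q) <= S_f(m) + 1, and primes r with f(r) >= f(q) are useless for
   representing numbers below f(q); so m p^(k+1) is weakly f-practical, hence
   f-practical. If f(p^(k+1)) > S_f(m p^k) + 1, a representation of
   S_f(m p^k) + 1 cannot use a divisor divisible by p^(k+1), so it only uses
   divisors of m p^k, whose f-values add up to at most S_f(m p^k). *)

Lemma nth_notin_take (T : eqType) x0 (s : seq T) i :
  uniq s -> i < size s -> nth x0 s i \notin take i s.
Proof.
rewrite -[in uniq s](cat_take_drop i s) cat_uniq => /and3P[_ /hasPn s_drop _] lt_i_s.
by apply: s_drop; rewrite (drop_nth x0) ?mem_head.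
Qed.

Lemma prefix_prod_partn n (s : seq nat) i : uniq s -> i <= size s ->
  \prod_(j < i) nth 0 s j ^ logn (nth 0 s j) n = n`_[pred y in take i s].
Proof.
move=> s_uniq; elim: i => [|i IHi] lt_i_s.
  rewrite big_ord0 take0; have [->|n_gt0] := posnP n; first by rewrite partn0.
  by rewrite part_p'nat //; apply/pnatP.
have s_i_new := nth_notin_take 0 s_uniq lt_i_s.
rewrite big_ord_recr /= IHi ?(ltnW lt_i_s) // (take_nth 0 lt_i_s) -p_part.
have [->|n_gt0] := posnP n; first by rewrite !partn0.
rewrite -[RHS](partnC [pred y in take i s] (part_gt0 _ n)) -!partnI.
congr (_ * _); apply: eq_partn => y; rewrite !inE mem_rcons inE.
  by case: eqP => [->|]; rewrite ?(negbTE s_i_new) ?andbb.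
by case: eqP => [->|] /=; rewrite ?s_i_new ?andbT ?andbF //; case: (y \in _).
Qed.

Lemma mem_take_sorted (T : eqType) (g : T -> nat) (s : seq T) x0 i r :
  sorted (fun x y => g x <= g y) s -> i < size s -> r \in s ->
  g r < g (nth x0 s i) -> r \in take i s.
Proof.
move=> s_sorted lt_i_s r_s lt_r; rewrite in_take // ltnNge; apply/negP => le_i_r.
have le_g_nth := sorted_leq_nth (fun y x z => @leq_trans (g y) (g x) (g z))
  (fun x => leqnn (g x)) x0 s_sorted.
have := le_g_nth i (index r s); rewrite !inE lt_i_s index_mem r_s nth_index //.
by move=> /(_ isT isT le_i_r); rewrite leqNgt lt_r.
Qed.

Lemma leq_add_mul_decomp x a b c : 0 < c -> c <= a + 1 -> x <= a + c * b ->
  exists r t, [/\ r <= a, t <= b & x = r + c * t].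
Proof.
move=> c_gt0 le_c le_x; have [le_q | lt_q] := leqP (x %/ c) b.
  exists (x %% c), (x %/ c); split=> //; last by rewrite addnC mulnC -divn_eq.
  by have := ltn_pmod x c_gt0; lia.
exists (x - c * b), b; split=> //; first by lia.
have : c * b <= x %/ c * c by rewrite mulnC leq_mul2r ltnW ?orbT.
by have := leq_divM x c; lia.
Qed.

Section DivisorSums.
Variable f : nat -> nat.

Lemma leq_sum_Sf n (D : seq nat) : 0 < n -> uniq D -> (forall d, d \in D -> d %| n) ->
  \sum_(d <- D) f d <= Sf f n.
Proof.
move=> n_gt0 D_uniq D_dvd.
apply: (uniq_sub_le_big (op := addn) leqnn (fun x y => leq_addr y x) xpredT f D_uniq
  (divisors_uniq n)).
by move=> d /D_dvd; rewrite -dvdn_divisors.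
Qed.

Lemma leq_Sf a b : 0 < b -> a %| b -> Sf f a <= Sf f b.
Proof.
move=> b_gt0 dv_ab; apply: leq_sum_Sf; rewrite ?divisors_uniq // => d.
by rewrite -dvdn_divisors ?(dvdn_gt0 b_gt0 dv_ab) // => /dvdn_trans; apply.
Qed.

Lemma leq_f_Sf d n : 0 < n -> d %| n -> f d <= Sf f n.
Proof.
move=> n_gt0 dv_dn; rewrite -(big_seq1 addn d f).
by apply: leq_sum_Sf => // x /[1!inE] /eqP ->.
Qed.

Definition f_representable n x :=
  exists D : seq nat, [/\ uniq D, {subset D <= divisors n} & x = \sum_(d <- D) f d].

Lemma f_practical_representable n x :
  f_practical f n -> x <= Sf f n -> f_representable n x.
Proof.
case=> _ repr; case: x => [|x] le_x; first by exists [::]; rewrite big_nil.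
by apply: repr; rewrite le_x.
Qed.

Lemma f_practical_new_divisor n a : f_practical f n -> 0 < a -> Sf f a < Sf f n ->
  exists d, [/\ d %| n, ~~ (d %| a) & f d <= Sf f a + 1].
Proof.
move=> n_practical a_gt0 lt_Sf; have [n_gt0 _] := n_practical.
have [D [D_uniq D_dvd sumD]] := f_practical_representable n_practical lt_Sf.
have /hasP[d dD d_new] : has (predC (dvdn^~ a)) D.
  rewrite has_predC; apply/negP => /allP D_dvd_a.
  by have := leq_sum_Sf a_gt0 D_uniq D_dvd_a; rewrite -sumD ltnn.
exists d; split => //; first by rewrite dvdn_divisors ?D_dvd.
by rewrite addn1 sumD (bigD1_seq d) //= leq_addr.
Qed.

End DivisorSums.

Definition prime_power_condition (f : nat -> nat) :=
  forall p m, prime p -> f_practical f m -> coprime m p -> f p <= Sf f m + 1 ->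
    forall k, f (p ^ k.+1) <= Sf f (m * p ^ k) + 1.

Section Multiplicative.
Variable f : nat -> nat.
Hypothesis f_mul : multiplicative f.
Hypothesis f_pow_step : forall p k, prime p -> 1 <= k -> f (p ^ k.-1) <= f (p ^ k).

Lemma f1 : f 1 = 1. Proof. by case: f_mul. Qed.

Lemma f_practical1 : f_practical f 1.
Proof.
split=> // x; rewrite /Sf /= big_seq1 f1 => /andP[x_gt0 le_x1].
have -> : x = 1 by apply/eqP; rewrite eqn_leq le_x1.
by exists [:: 1]; rewrite big_seq1 f1; split=> // y.
Qed.

Lemma f_mul_coprime a b : 0 < a -> 0 < b -> coprime a b -> f (a * b) = f a * f b.
Proof. by case: f_mul => _; apply. Qed.

Lemma f_partC (pi : nat_pred) n : 0 < n -> f n = f n`_pi * f n`_pi^'.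
Proof.
by move=> n_gt0; rewrite -{1}(partnC pi n_gt0) f_mul_coprime ?part_gt0 ?coprime_partC.
Qed.

Lemma leq_f_pow p i j : prime p -> i <= j -> f (p ^ i) <= f (p ^ j).
Proof.
move=> p_prime; elim: j => [|j IHj]; first by rewrite leqn0 => /eqP ->.
rewrite leq_eqVlt => /predU1P[-> // | /IHj le_ij].
exact: leq_trans le_ij (f_pow_step p_prime (ltn0Sn j)).
Qed.

(* Split off the p-part for p = pdiv b: f is monotone on powers of p, and the
   p'-part of b is smaller than b. *)
Lemma leq_f_dvd a b : 0 < b -> a %| b -> f a <= f b.
Proof.
elim: b {-2}b (leqnn b) a => [|N IHN] b le_bN a b_gt0 dv_ab.
  by case: b le_bN b_gt0 dv_ab.
have a_gt0 := dvdn_gt0 b_gt0 dv_ab.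
have [le_b1 | lt_1b] := leqP b 1.
  have b1 : b = 1 by apply/eqP; rewrite eqn_leq le_b1.
  by move: dv_ab; rewrite b1 dvdn1 => /eqP ->.
set p := pdiv b; have p_prime : prime p := pdiv_prime lt_1b.
rewrite (f_partC p a_gt0) (f_partC p b_gt0) !p_part leq_mul //.
  exact/leq_f_pow/dvdn_leq_log.
apply: IHN; rewrite ?part_gt0 ?partn_dvd //.
have b_p_gt1 : 1 < b`_p by rewrite p_part_gt1 pi_pdiv.
have := partnC p b_gt0; have := part_gt0 p^' b; nia.
Qed.

Lemma f_gt0 n : 0 < n -> 0 < f n.
Proof. by move=> n_gt0; rewrite -f1 leq_f_dvd. Qed.

Section PrimePowerStep.
Variables p m : nat.
Hypotheses (p_prime : prime p) (m_gt0 : 0 < m) (m_coprime_p : coprime m p).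

Let p_gt0 : 0 < p := prime_gt0 p_prime.

Lemma mul_exp_gt0 j : 0 < m * p ^ j.
Proof. by rewrite muln_gt0 m_gt0 expn_gt0 p_gt0. Qed.

Lemma dvdn_mul_expS j x : x %| m * p ^ j.+1 ->
  x %| m * p ^ j \/ exists2 d, d %| m & x = d * p ^ j.+1.
Proof.
move=> dv_x; have x_gt0 := dvdn_gt0 (mul_exp_gt0 j.+1) dv_x.
have [dv_pj_x | ndv_pj_x] := boolP (p ^ j.+1 %| x).
  right; exists (x %/ p ^ j.+1); last by rewrite divnK.
  by rewrite -(@dvdn_pmul2r (p ^ j.+1)) ?expn_gt0 ?p_gt0 ?divnK.
left; move: ndv_pj_x; rewrite pfactor_dvdn // -ltnNge ltnS => le_log_j.
rewrite -(partnC p x_gt0) mulnC dvdn_mul //; last by rewrite p_part dvdn_exp2l.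
rewrite -(@Gauss_dvdl _ _ (p ^ j.+1)); first exact: dvdn_trans (dvdn_part _ _) dv_x.
by apply: (@pnat_coprime p^'); rewrite ?part_pnat // pnatNK pnatX pnat_id.
Qed.

Lemma ndvdn_mul_expS j d : ~~ (d * p ^ j.+1 %| m * p ^ j).
Proof.
rewrite expnS mulnA dvdn_pmul2r ?expn_gt0 ?p_gt0 //; apply/negP.
move=> /(dvdn_trans (dvdn_mull d (dvdnn p))); apply/negP.
by rewrite -prime_coprime // coprime_sym.
Qed.

Lemma f_mul_expS j d : d %| m -> f (d * p ^ j.+1) = f d * f (p ^ j.+1).
Proof.
move=> dv_dm; rewrite f_mul_coprime ?expn_gt0 ?p_gt0 ?(dvdn_gt0 m_gt0 dv_dm) //.
exact/coprimeXr/(coprime_dvdl dv_dm).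
Qed.

Lemma mul_expS_inj j : injective (fun d => d * p ^ j.+1).
Proof. by move=> a b /eqP; rewrite eqn_pmul2r ?expn_gt0 ?p_gt0 // => /eqP. Qed.

Lemma divisors_mul_expS j : perm_eq (divisors (m * p ^ j.+1))
  (divisors (m * p ^ j) ++ [seq d * p ^ j.+1 | d <- divisors m]).
Proof.
apply: uniq_perm; rewrite ?divisors_uniq //.
  rewrite cat_uniq divisors_uniq (map_inj_uniq (@mul_expS_inj j)) divisors_uniq andbT /=.
  apply/hasPn => _ /mapP[d _ ->].
  by rewrite -dvdn_divisors ?mul_exp_gt0 // ndvdn_mul_expS.
move=> x; rewrite mem_cat -!dvdn_divisors ?mul_exp_gt0 //; apply/idP/orP.
  case/dvdn_mul_expS => [-> | [d dv_dm ->]]; [by left | right].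
  by apply: map_f; rewrite -dvdn_divisors.
case=> [/dvdn_trans-> // | /mapP[d]]; first by rewrite dvdn_pmul2l ?dvdn_exp2l.
by rewrite -dvdn_divisors // => dv_dm ->; rewrite dvdn_pmul2r ?expn_gt0 ?p_gt0.
Qed.

Lemma Sf_mul_expS j : Sf f (m * p ^ j.+1) = Sf f (m * p ^ j) + f (p ^ j.+1) * Sf f m.
Proof.
rewrite /Sf (perm_big _ (divisors_mul_expS j)) big_cat big_map big_distrr /=.
congr (_ + _); rewrite !big_seq; apply: eq_bigr => d.
by rewrite -dvdn_divisors // => /f_mul_expS ->; rewrite mulnC.
Qed.

Lemma representable_mul_expS j r t :
  f_representable f (m * p ^ j) r -> f_representable f m t ->
  f_representable f (m * p ^ j.+1) (r + f (p ^ j.+1) * t).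
Proof.
case=> [D1 [D1_uniq D1_sub ->]] [D2 [D2_uniq D2_sub ->]].
exists (D1 ++ [seq d * p ^ j.+1 | d <- D2]); split.
- rewrite cat_uniq D1_uniq (map_inj_uniq (@mul_expS_inj j)) D2_uniq andbT /=.
  apply/hasPn => _ /mapP[d _ ->]; apply/negP => /D1_sub.
  by rewrite -dvdn_divisors ?mul_exp_gt0 // (negbTE (ndvdn_mul_expS _ _)).
- move=> y; rewrite (perm_mem (divisors_mul_expS j)) !mem_cat.
  case/orP => [/D1_sub -> // | /mapP[d /D2_sub d_div ->]].
  by apply/orP; right; apply: map_f.
rewrite big_cat big_map big_distrr /=; congr (_ + _); rewrite !big_seq.
apply: eq_bigr => d /D2_sub; rewrite -dvdn_divisors // => /f_mul_expS ->.
by rewrite mulnC.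
Qed.

Lemma f_practical_mul_expS j : f_practical f m -> f_practical f (m * p ^ j) ->
  f (p ^ j.+1) <= Sf f (m * p ^ j) + 1 -> f_practical f (m * p ^ j.+1).
Proof.
move=> m_practical mpj_practical le_F; split=> [|x /andP[_]]; first exact: mul_exp_gt0.
have F_gt0 : 0 < f (p ^ j.+1) by rewrite f_gt0 ?expn_gt0 ?p_gt0.
rewrite Sf_mul_expS => /(leq_add_mul_decomp F_gt0 le_F)[r [t [le_r le_t ->]]].
by apply: representable_mul_expS; apply: f_practical_representable.
Qed.

Lemma f_practical_mul_exp : f_practical f m ->
  (forall k, f (p ^ k.+1) <= Sf f (m * p ^ k) + 1) ->
  forall e, f_practical f (m * p ^ e).
Proof.
move=> m_practical le_f; elim=> [|e IHe]; first by rewrite muln1.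
exact: f_practical_mul_expS.
Qed.

Lemma f_practical_mul_expS_bound k : f_practical f (m * p ^ k.+1) ->
  f (p ^ k.+1) <= Sf f (m * p ^ k) + 1.
Proof.
move=> mpk_practical; rewrite leqNgt; apply/negP => lt_S_F.
have lt_Sf : Sf f (m * p ^ k) < Sf f (m * p ^ k.+1).
  rewrite Sf_mul_expS -addn1 leq_add2l muln_gt0 f_gt0 ?expn_gt0 ?p_gt0 //=.
  by rewrite -[1]f1 leq_f_Sf.
have [d [dv_d ndv_d le_fd]] :=
  f_practical_new_divisor mpk_practical (mul_exp_gt0 k) lt_Sf.
case/dvdn_mul_expS: dv_d ndv_d le_fd => [-> // | [d' dv_d'm ->] _ le_fd].
have le_F_fd : f (p ^ k.+1) <= f (d' * p ^ k.+1).
  by rewrite f_mul_expS // leq_pmull ?f_gt0 ?(dvdn_gt0 m_gt0 dv_d'm).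
by have := leq_trans lt_S_F (leq_trans le_F_fd le_fd); rewrite ltnn.
Qed.

End PrimePowerStep.

(* Primes r with f(r) >= t cannot contribute to representations of numbers
   below t. *)
Lemma leq_Sf_partn_lt n t : f_practical f n -> t <= Sf f n + 1 ->
  t <= Sf f n`_[pred r | f r < t] + 1.
Proof.
move=> n_practical le_t; have [n_gt0 _] := n_practical.
rewrite leqNgt; apply/negP => lt_t.
have lt_Sf : Sf f n`_[pred r | f r < t] < Sf f n.
  by rewrite -(ltn_add2r 1) (leq_trans lt_t le_t).
have [d [dv_dn ndv_d le_fd]] :=
  f_practical_new_divisor n_practical (part_gt0 _ _) lt_Sf.
have d_gt0 := dvdn_gt0 n_gt0 dv_dn.
case/negP: ndv_d; rewrite -(@part_pnat_id [pred r | f r < t] d) ?partn_dvd //.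
apply/pnatP => // q q_prime dv_qd; rewrite inE.
exact: leq_ltn_trans (leq_f_dvd d_gt0 dv_qd) (leq_ltn_trans le_fd lt_t).
Qed.

Lemma weakly_f_practical_partn n : 0 < n ->
  (forall q, prime q -> q %| n -> f q <= Sf f n`_[pred r | f r < f q] + 1) ->
  weakly_f_practical f n.
Proof.
move=> n_gt0 le_fq; split=> //.
set s := sort (fun p q => f p <= f q) (primes n).
have s_perm : perm_eq s (primes n) by rewrite perm_sort.
have s_sorted : sorted (fun p q => f p <= f q) s.
  by apply: sort_sorted => a b; apply: leq_total.
have s_uniq : uniq s by rewrite (perm_uniq s_perm) primes_uniq.
exists s; split=> // i lt_i_s; rewrite prefix_prod_partn ?(ltnW lt_i_s) //.
have := mem_nth 0 lt_i_s; rewrite (perm_mem s_perm) mem_primes => /and3P[q_prime _ dv_qn].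
apply: leq_trans (le_fq _ q_prime dv_qn) _; rewrite leq_add2r leq_Sf ?part_gt0 //.
apply: sub_in_partn => r r_n; rewrite !inE => lt_fr.
by apply: mem_take_sorted s_sorted lt_i_s _ lt_fr; rewrite (perm_mem s_perm).
Qed.

Lemma convenient_prime_power_condition :
  convenient f -> prime_power_condition f.
Proof.
move=> f_conv p m p_prime m_practical m_coprime_p le_fp k.
have [m_gt0 _] := m_practical.
have mpk_gt0 : 0 < m * p ^ k.+1 by rewrite muln_gt0 m_gt0 expn_gt0 prime_gt0.
apply: (f_practical_mul_expS_bound p_prime m_gt0 m_coprime_p); apply: f_conv.
apply: weakly_f_practical_partn => // q q_prime dv_q.
have le_fq : f q <= Sf f m + 1.
  move: dv_q; rewrite (Euclid_dvdM _ _ q_prime) (Euclid_dvdX _ _ q_prime).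
  rewrite (dvdn_prime2 q_prime p_prime).
  case/orP=> [dv_qm | /andP[/eqP-> _] //].
  exact: leq_trans (leq_f_Sf f m_gt0 dv_qm) (leq_addr 1 _).
apply: leq_trans (leq_Sf_partn_lt m_practical le_fq) _.
by rewrite leq_add2r leq_Sf ?partn_dvd ?dvdn_mulr.
Qed.

Lemma prime_power_condition_convenient :
  prime_power_condition f -> convenient f.
Proof.
move=> cond n [n_gt0 [s [s_perm _ le_s]]].
have s_uniq : uniq s by rewrite (perm_uniq s_perm) primes_uniq.
suff prefix_practical i : i <= size s -> f_practical f n`_[pred y in take i s].
  have := prefix_practical _ (leqnn _); rewrite take_size.
  by rewrite (@eq_partn _ \pi(n)) ?partn_pi // => y; rewrite !inE (perm_mem s_perm).
elim: i => [|i IHi] lt_i_s.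
  by rewrite -(prefix_prod_partn n s_uniq (leq0n _)) big_ord0; apply: f_practical1.
rewrite -(prefix_prod_partn n s_uniq lt_i_s) big_ord_recr /=.
rewrite (prefix_prod_partn n s_uniq (ltnW lt_i_s)).
have := mem_nth 0 lt_i_s; rewrite (perm_mem s_perm) mem_primes => /and3P[q_prime _ _].
have prefix_coprime : coprime n`_[pred y in take i s] (nth 0 s i).
  apply: (@pnat_coprime [pred y in take i s]); first exact: part_pnat.
  by rewrite pnatE // !inE nth_notin_take.
have prefix_practical := IHi (ltnW lt_i_s).
have le_fq : f (nth 0 s i) <= Sf f n`_[pred y in take i s] + 1.
  by have := le_s i lt_i_s; rewrite prefix_prod_partn ?(ltnW lt_i_s).
exact: (f_practical_mul_exp q_prime (part_gt0 _ _) prefix_coprime prefix_practical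
  (cond _ _ q_prime prefix_practical prefix_coprime le_fq)).
Qed.

End Multiplicative.

Theorem theorem3p3 (f : nat -> nat) :
  multiplicative f ->
  (forall p k, prime p -> 1 <= k -> f (p ^ k.-1) <= f (p ^ k)) ->
  (convenient f <->
   (forall p m, prime p -> f_practical f m -> coprime m p ->
      f p <= Sf f m + 1 ->
      forall k, f (p ^ k.+1) <= Sf f (m * p ^ k) + 1)).
Proof.
move=> f_mul f_pow_step; split.
- exact: convenient_prime_power_condition.
- exact: prime_power_condition_convenient.
Qed.
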